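(* (1) For every $n$, there exists $N$ such that every graph on at least $N$ vertices has a vertex-minor isomorphic to the edgeless graph $\overline{K_n}$ on $n$ vertices. (2) For every $n$, there exists $N$ such that every connected graph having at least $N$ vertices has a vertex-minor isomorphic to $K_n$. (3) For every $n$, there exists $N$ such that every graph having at least $N$ edges has a vertex-minor isomorphic to $K_n$ or to the graph obtained from two disjoint copies of the edgeless graph $\overline{K_n}$ by adding a perfect matching between them (i.e., a perfect matching with $n$ edges, $nK_2$).
   Context: All graphs are simple. A graph $H$ is a vertex-minor of $G$ if $H$ is an induced subgraph of a graph obtained from $G$ by a sequence of local complementations (local complementation at $v$ replaces the subgraph induced on the neighborhood of $v$ by its complement). *)

From mathcomp Require Import all_boot.
Set Implicit Arguments. Unset Strict Implicit. Unset Printing Implicit Defensive.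

Definition simple_graph (T : finType) (e : rel T) : Prop :=
  symmetric e /\ irreflexive e.

Definition local_compl (T : finType) (e : rel T) (v : T) : rel T :=
  fun x y => if [&& e v x, e v y & x != y] then ~~ e x y else e x y.

Definition local_compls (T : finType) (e : rel T) (s : seq T) : rel T :=
  foldl (@local_compl T) e s.

Definition iso_induced (T T' : finType) (eH : rel T') (eG : rel T) : Prop :=
  exists f : T' -> T, injective f /\ forall x y, eH x y = eG (f x) (f y).

Definition has_vertex_minor (T T' : finType) (eG : rel T) (eH : rel T') : Prop :=
  exists s : seq T, iso_induced eH (local_compls eG s).

Definition connected_graph (T : finType) (e : rel T) : Prop :=
  forall x y : T, connect e x y.

Definition num_edges (T : finType) (e : rel T) : nat :=
  #|[set E : {set T} | [exists u, exists v, (E == [set u; v]) && e u v]]|.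

Definition complete_rel (n : nat) : rel 'I_n := fun i j => i != j.
Definition edgeless_rel (n : nat) : rel 'I_n := fun _ _ => false.
Definition matching_rel (n : nat) : rel ('I_n + 'I_n)%type :=
  fun x y => match x, y with
             | inl i, inr j => i == j
             | inr i, inl j => i == j
             | _, _ => false
             end.

From mathcomp Require Import all_boot zify.
Set Implicit Arguments. Unset Strict Implicit. Unset Printing Implicit Defensive.

(* Vertex-minors pass to induced subgraphs, and local complementation at v
   exchanges cliques and independent sets inside the neighbourhood of v.
   (1) Ramsey gives a large clique or independent set; complementing at one
   vertex of a clique makes the rest of it independent.
   If some vertex has large degree, Ramsey inside its neighbourhood gives K_n,
   complementing at that vertex when the large set is independent; so we may
   assume the degrees are bounded by D.
   (2) A large connected graph of bounded degree has a vertex far from any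
   given one, hence a long shortest path, which is an induced path
   0 - 1 - ... - m; complementing at 1, 2, ..., 2n in turn leaves the even
   vertices 0, 2, ..., 2n - 2 pairwise adjacent.
   (3) A graph of bounded degree with many edges has many non-isolated
   vertices; choosing an edge and discarding its second neighbourhood,
   which is of bounded size, repeatedly yields an induced matching nK_2. *)

Lemma local_compl_induced (T T' : finType) (f : T' -> T) (e : rel T) (e' : rel T') :
  injective f -> (forall x y, e' x y = e (f x) (f y)) ->
  forall v x y, local_compl e' v x y = local_compl e (f v) (f x) (f y).
Proof. by move=> f_inj f_ind v x y; rewrite /local_compl !f_ind (inj_eq f_inj). Qed.

Lemma local_compls_induced (T T' : finType) (f : T' -> T) (s : seq T') :
  injective f -> forall (e : rel T) (e' : rel T'),
  (forall x y, e' x y = e (f x) (f y)) ->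
  forall x y, local_compls e' s x y = local_compls e (map f s) (f x) (f y).
Proof.
move=> f_inj; elim: s => [|v s IHs] e e' f_ind x y //=.
by apply: IHs => {}x {}y; apply: local_compl_induced.
Qed.

Lemma has_vertex_minor_induced (T T' T'' : finType) (e : rel T) (e' : rel T') (e'' : rel T'') :
  iso_induced e' e -> has_vertex_minor e' e'' -> has_vertex_minor e e''.
Proof.
move=> [f [f_inj f_ind]] [s [g [g_inj g_ind]]]; exists (map f s), (f \o g); split.
  exact: inj_comp.
by move=> x y; rewrite g_ind /=; apply: local_compls_induced.
Qed.

Lemma injection_into_set (T : finType) (C : {set T}) n : n <= #|C| ->
  exists f : 'I_n -> T, injective f /\ forall i, f i \in C.
Proof.
move=> nC; exists (fun i => enum_val (A := C) (widen_ord nC i)); split.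
  by move=> i j /enum_val_inj /(congr1 val) /= /val_inj.
by move=> i; apply: enum_valP.
Qed.

Definition nbhd (T : finType) (e : rel T) (v : T) : {set T} := [set x | e v x].

Section CliquesIndependentSets.
Variables (T : finType) (e : rel T).

Definition clique (C : {set T}) := {in C &, forall x y, x != y -> e x y}.
Definition indep (C : {set T}) := {in C &, forall x y, x != y -> ~~ e x y}.

Lemma clique_subset (B C : {set T}) : B \subset C -> clique C -> clique B.
Proof. by move=> /subsetP BC Cc x y /BC xC /BC; apply: Cc. Qed.

Lemma clique_setD1_nbhd v (C : {set T}) : v \in C -> clique C -> C :\ v \subset nbhd e v.
Proof.
by move=> vC Cc; apply/subsetP=> x /setD1P[xv xC]; rewrite inE Cc // eq_sym.
Qed.

Hypothesis e_sym : symmetric e.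

Lemma clique_setU1 v (C : {set T}) : C \subset nbhd e v -> clique C -> clique (v |: C).
Proof.
move=> /subsetP CN Cc x y /setU1P[->|xC] /setU1P[->|yC]; rewrite ?eqxx // => xy.
- by have := CN y yC; rewrite inE.
- by have := CN x xC; rewrite inE e_sym.
- exact: Cc.
Qed.

Lemma indep_setU1 v (C : {set T}) : C \subset ~: nbhd e v -> indep C -> indep (v |: C).
Proof.
move=> /subsetP CN Ci x y /setU1P[->|xC] /setU1P[->|yC]; rewrite ?eqxx // => xy.
- by have := CN y yC; rewrite !inE.
- by have := CN x xC; rewrite !inE e_sym.
- exact: Ci.
Qed.

End CliquesIndependentSets.

Lemma ramsey (T : finType) (e : rel T) : symmetric e ->
  forall a b (A : {set T}), 2 ^ (a + b) <= #|A| ->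
  exists2 C : {set T}, C \subset A &
    (a <= #|C| /\ clique e C) \/ (b <= #|C| /\ indep e C).
Proof.
move=> e_sym; elim=> [|a IHa] b A.
  by exists set0; [exact: sub0set | left; split=> // x y; rewrite inE].
elim: b A => [|b IHb] A.
  by exists set0; [exact: sub0set | right; split=> // x y; rewrite inE].
move=> HA; have /card_gt0P[v vA] : 0 < #|A| by rewrite (leq_trans _ HA) ?expn_gt0.
pose Nv := (A :\ v) :&: nbhd e v; pose Mv := (A :\ v) :\: nbhd e v.
have NvA : Nv \subset A :\ v by apply: subsetIl.
have MvA : Mv \subset A :\ v by apply: subsetDl.
have A_split : #|Nv| + #|Mv| = #|A|.-1 by rewrite cardsID (cardsD1 v A) vA.
have grow (C : {set T}) : C \subset A :\ v -> #|v |: C| = #|C|.+1.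
  by move=> /subsetP CA; rewrite cardsU1 (contra (CA v)) // !inE eqxx.
have subA (C : {set T}) : C \subset A :\ v -> v |: C \subset A.
  by move=> CA; rewrite subUset sub1set vA (subset_trans CA) ?subsetDl.
have [bigN | bigM] : 2 ^ (a + b.+1) <= #|Nv| \/ 2 ^ (a.+1 + b) <= #|Mv|.
  by rewrite [a.+1 + b]addSnnS; move: HA; rewrite addSn expnS; lia.
- have [C CN [[Ca Cc] | Cind]] := IHa b.+1 Nv bigN.
    exists (v |: C); first exact: subA (subset_trans CN NvA).
    left; rewrite grow ?(subset_trans CN NvA) //; split=> //.
    by apply: clique_setU1 => //; apply: subset_trans CN (subsetIr _ _).
  by exists C; [apply: subset_trans CN (subset_trans NvA (subsetDl _ _)) | right].
- have [C CM [Cc | [Cb Ci]]] := IHb Mv bigM.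
    by exists C; [apply: subset_trans CM (subset_trans MvA (subsetDl _ _)) | left].
  exists (v |: C); first exact: subA (subset_trans CM MvA).
  right; rewrite grow ?(subset_trans CM MvA) //; split=> //.
  apply: indep_setU1 => //; apply: subset_trans CM _.
  by apply/subsetP=> x; rewrite !inE => /andP[].
Qed.

Section LocalComplementation.
Variables (T : finType) (e : rel T) (v : T).

Lemma local_compl_irr : irreflexive e -> irreflexive (local_compl e v).
Proof. by move=> e_irr x; rewrite /local_compl eqxx !andbF. Qed.

Lemma local_compl_nbhd x y : x \in nbhd e v -> y \in nbhd e v -> x != y ->
  local_compl e v x y = ~~ e x y.
Proof. by rewrite !inE /local_compl => -> -> ->. Qed.

Lemma clique_local_compl (C : {set T}) :
  C \subset nbhd e v -> clique e C -> indep (local_compl e v) C.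
Proof.
move=> /subsetP CN Cc x y xC yC xy.
by rewrite local_compl_nbhd ?CN // negbK Cc.
Qed.

Lemma indep_local_compl (C : {set T}) :
  C \subset nbhd e v -> indep e C -> clique (local_compl e v) C.
Proof.
by move=> /subsetP CN Ci x y xC yC xy; rewrite local_compl_nbhd ?CN // Ci.
Qed.

End LocalComplementation.

Section InducedFromSets.
Variables (T : finType) (e : rel T) (C : {set T}) (n : nat).
Hypotheses (e_irr : irreflexive e) (nC : n <= #|C|).

Lemma clique_iso_complete : clique e C -> iso_induced (@complete_rel n) e.
Proof.
move=> Cc; have [f [f_inj fC]] := injection_into_set nC.
exists f; split=> // i j; rewrite /complete_rel.
have [->|ij] := eqVneq i j; first by rewrite e_irr.
by rewrite Cc // (inj_eq f_inj).
Qed.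

Lemma indep_iso_edgeless : indep e C -> iso_induced (@edgeless_rel n) e.
Proof.
move=> Ci; have [f [f_inj fC]] := injection_into_set nC.
exists f; split=> // i j; rewrite /edgeless_rel.
have [->|ij] := eqVneq i j; first by rewrite e_irr.
by apply/esym/negbTE; rewrite Ci // (inj_eq f_inj).
Qed.

End InducedFromSets.

Lemma edgeless_vertex_minor n (T : finType) (e : rel T) : simple_graph e ->
  2 ^ (n.+1 + n) <= #|T| -> has_vertex_minor e (@edgeless_rel n).
Proof.
move=> [e_sym e_irr]; rewrite -cardsT => /(ramsey e_sym)[C _ [[Ca Cc] | [Cb Ci]]].
- have /card_gt0P[v vC] : 0 < #|C| by apply: leq_trans Ca.
  exists [:: v]; apply: (@indep_iso_edgeless _ _ (C :\ v)).
  + exact: local_compl_irr.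
  + by move: Ca; rewrite (cardsD1 v C) vC.
  + apply: clique_local_compl; first exact: clique_setD1_nbhd.
    by apply: clique_subset Cc; apply: subsetDl.
- by exists [::]; apply: indep_iso_edgeless Ci.
Qed.

Lemma complete_minor_of_degree n (T : finType) (e : rel T) v : simple_graph e ->
  2 ^ (n + n) <= #|nbhd e v| -> has_vertex_minor e (@complete_rel n).
Proof.
move=> [e_sym e_irr] /(ramsey e_sym)[C CN [[Ca Cc] | [Cb Ci]]].
- by exists [::]; apply: clique_iso_complete Cc.
- exists [:: v]; apply: (@clique_iso_complete _ _ C) => //.
    exact: local_compl_irr.
  exact: indep_local_compl.
Qed.

Lemma complete_minor_or_degree_le n (T : finType) (e : rel T) : simple_graph e ->
  has_vertex_minor e (@complete_rel n) \/ forall x, #|nbhd e x| <= 2 ^ (n + n).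
Proof.
move=> se; case: (boolP [exists v, 2 ^ (n + n) <= #|nbhd e v|]) =>
    [/existsP[v Hv] | /existsPn small].
  by left; apply: complete_minor_of_degree se Hv.
by right=> x; move: (small x); rewrite -ltnNge => /ltnW.
Qed.

Lemma card_bigcup_le (T I : finType) (P : {pred I}) (F : I -> {set T}) c :
  (forall i, P i -> #|F i| <= c) -> #|\bigcup_(i in P) F i| <= #|P| * c.
Proof.
move=> Fc; rewrite -sum_nat_const.
elim/big_rec2: _ => [|i S m Pi IH]; first by rewrite cards0.
by apply: leq_trans (leq_card_setU _ _) _; apply: leq_add => //; apply: Fc.
Qed.

Section Neighbourhoods.
Variables (T : finType) (e : rel T).

Definition closed_nbhd (X : {set T}) : {set T} := \bigcup_(x in X) (x |: nbhd e x).

Fixpoint ball (x : T) (r : nat) : {set T} :=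
  if r is r'.+1 then closed_nbhd (ball x r') else [set x].

Lemma mem_closed_nbhd (X : {set T}) x y : x \in X -> (y == x) || e x y ->
  y \in closed_nbhd X.
Proof. by move=> xX xy; apply/bigcupP; exists x; rewrite // !inE. Qed.

Lemma subset_closed_nbhd (X : {set T}) : X \subset closed_nbhd X.
Proof. by apply/subsetP=> x xX; rewrite (mem_closed_nbhd xX) ?eqxx. Qed.

Lemma ball_monotone x r s : r <= s -> ball x r \subset ball x s.
Proof.
move=> /subnKC <-; elim: (s - r) => [|d IHd]; first by rewrite addn0.
by rewrite addnS (subset_trans IHd) ?subset_closed_nbhd.
Qed.

Lemma path_last_in_ball x p : path e x p -> last x p \in ball x (size p).
Proof.
elim/last_ind: p => [|p z IHp]; first by rewrite inE.
rewrite rcons_path last_rcons size_rcons => /andP[/IHp pz ez] /=.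
by rewrite (mem_closed_nbhd pz) ?ez ?orbT.
Qed.

Definition far (u w : T) := (u != w) && ~~ e u w.

Lemma far_notin_closed_nbhd (X : {set T}) x y : x \in X -> y \notin closed_nbhd X ->
  far x y.
Proof.
move=> xX yX; apply/andP; split.
  by apply: contraNneq yX => <-; rewrite (mem_closed_nbhd xX) ?eqxx.
by apply: contra yX => exy; rewrite (mem_closed_nbhd xX) ?exy ?orbT.
Qed.

Variable D : nat.
Hypothesis degree_le : forall x, #|nbhd e x| <= D.

Lemma card_closed_nbhd (X : {set T}) : #|closed_nbhd X| <= #|X| * D.+1.
Proof.
apply: card_bigcup_le => x _.
by rewrite (leq_trans (leq_card_setU _ _)) // cards1 add1n ltnS.
Qed.

Lemma card_ball x r : #|ball x r| <= D.+1 ^ r.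
Proof.
elim: r => [|r IHr] /=; first by rewrite cards1.
by rewrite (leq_trans (card_closed_nbhd _)) // expnSr leq_mul.
Qed.

End Neighbourhoods.

Definition path_rel (i j : nat) : bool := (j == i.+1) || (i == j.+1).

(* The path 0 - 1 - 2 - ... after local complementation at 1, 2, ..., k. *)
Definition path_compl (k i j : nat) : bool :=
  (i != j) && (if maxn i j <= k then maxn i j %% 2 == k %% 2
               else (maxn i j == k.+1) || (maxn i j == (minn i j).+1)).

Lemma path_compl0 i j : path_compl 0 i j = path_rel i j.
Proof. rewrite /path_compl /path_rel; repeat case: ifP; lia. Qed.

Lemma path_complS k i j :
  (if [&& path_compl k k.+1 i, path_compl k k.+1 j & i != j]
   then ~~ path_compl k i j else path_compl k i j) = path_compl k.+1 i j.
Proof. rewrite /path_compl; repeat case: ifP; lia. Qed.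

Lemma path_compl_even n i j : i < n -> j < n -> path_compl (2 * n) (2 * i) (2 * j) = (i != j).
Proof. rewrite /path_compl; repeat case: ifP; lia. Qed.

Lemma local_compls_rcons (T : finType) (e : rel T) s v :
  local_compls e (rcons s v) = local_compl (local_compls e s) v.
Proof. exact: foldl_rcons. Qed.

Lemma local_compls_path m k : k <= m -> forall x y : 'I_m.+1,
  local_compls (fun x y : 'I_m.+1 => path_rel x y) (map inord (iota 1 k)) x y =
  path_compl k x y.
Proof.
elim: k => [|k IHk] km x y; first exact/esym/path_compl0.
rewrite -[X in iota 1 X]addn1 iotaD cats1 map_rcons local_compls_rcons.
by rewrite /local_compl !IHk ?(ltnW km) // inordK ?add1n ?ltnS // path_complS.
Qed.

Lemma path_complete_minor n m : 2 * n <= m ->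
  has_vertex_minor (fun x y : 'I_m.+1 => path_rel x y) (@complete_rel n).
Proof.
move=> nm; exists (map inord (iota 1 (2 * n))), (fun i : 'I_n => inord (2 * i)).
have even_lt (i : 'I_n) : 2 * i < m.+1 by have := ltn_ord i; lia.
split=> [i j /(congr1 val) | i j].
  by rewrite /= !inordK // => /eqP; rewrite eqn_mul2l /= => /eqP /val_inj.
by rewrite local_compls_path // !inordK // path_compl_even.
Qed.

Section PathSurgery.
Variables (T : eqType) (e : rel T) (x : T) (p : seq T).

Lemma last_take i : i <= size p -> last x (take i p) = nth x (x :: p) i.
Proof.
elim: p x i => [|z q IHq] y [|i] //= iq.
by rewrite IHq // (set_nth_default y).
Qed.

Lemma last_drop i : i <= size p -> last x p = last (nth x (x :: p) i) (drop i p).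
Proof. by move=> ip; rewrite -{1}(cat_take_drop i p) last_cat last_take. Qed.

Lemma path_take_drop i : path e x p -> i <= size p ->
  path e x (take i p) /\ path e (nth x (x :: p) i) (drop i p).
Proof.
move=> p_path ip; move: p_path.
by rewrite -{1}(cat_take_drop i p) cat_path last_take // => /andP.
Qed.

Lemma path_shortcut i k r : path e x p -> i <= k -> k <= size p ->
  path e (nth x (x :: p) i) r -> last (nth x (x :: p) i) r = nth x (x :: p) k ->
  let p' := take i p ++ r ++ drop k p in
  [/\ path e x p', last x p' = last x p & size p' = i + size r + (size p - k)].
Proof.
move=> p_path ik kp r_path r_last /=; have ip := leq_trans ik kp.
have [pi_path _] := path_take_drop p_path ip.
have [_ pk_path] := path_take_drop p_path kp.
split.
- by rewrite cat_path last_take // pi_path /= cat_path r_path r_last.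
- by rewrite last_cat last_take // last_cat r_last -last_drop.
- by rewrite !size_cat size_take size_drop; case: ltnP => ?; lia.
Qed.

End PathSurgery.

Lemma shortest_path_exists (T : finType) (e : rel T) x y : connect e x y ->
  exists p, [/\ path e x p, last x p = y &
    forall p', path e x p' -> last x p' = y -> size p <= size p'].
Proof.
move=> /connectP[p0 p0_path p0_last].
pose reach k := [exists t : k.-tuple T, path e x t && (last x t == y)].
have reach_ex : exists k, reach k.
  by exists (size p0); apply/existsP; exists (in_tuple p0); rewrite p0_path p0_last eqxx.
case: (ex_minnP reach_ex) => m /existsP[t /andP[t_path /eqP t_last]] t_min.
exists t; rewrite size_tuple; split=> // p' p'_path p'_last.
by apply: t_min; apply/existsP; exists (in_tuple p'); rewrite p'_path p'_last eqxx.
Qed.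

Section ShortestPath.
Variables (T : finType) (e : rel T) (x : T) (p : seq T).
Hypothesis p_path : path e x p.
Hypothesis p_min : forall p', path e x p' -> last x p' = last x p -> size p <= size p'.
Local Notation q i := (nth x (x :: p) i).

Lemma shortest_path_uniq i j : i < j -> j <= size p -> q i != q j.
Proof.
move=> ij jp; apply/negP => /eqP qij.
have [p'_path p'_last p'_size] :=
  path_shortcut p_path (ltnW ij) jp (erefl : path e (q i) [::]) qij.
by have := p_min p'_path p'_last; rewrite p'_size /=; lia.
Qed.

Lemma shortest_path_chordless i j : i < j -> j <= size p -> e (q i) (q j) -> j = i.+1.
Proof.
move=> ij jp eij; have r_path : path e (q i) [:: q j] by rewrite /= eij.
have [p'_path p'_last p'_size] := path_shortcut p_path (ltnW ij) jp r_path erefl.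
by have := p_min p'_path p'_last; rewrite p'_size /=; lia.
Qed.

Lemma shortest_path_induced i j : symmetric e -> irreflexive e ->
  i <= size p -> j <= size p -> e (q i) (q j) = path_rel i j.
Proof.
move=> e_sym e_irr ip jp.
have step k : k < size p -> e (q k) (q k.+1) by move=> kp; apply/(pathP x): kp.
rewrite /path_rel; case: (ltngtP i j) => [ij | ji | ->]; last by rewrite e_irr; lia.
- have [ji1 | ne] := eqVneq j i.+1; first by subst j; rewrite step ?eqxx.
  have -> /= : (i == j.+1) = false by lia.
  by apply/negbTE/negP => /(shortest_path_chordless ij jp) ji1; rewrite ji1 eqxx in ne.
- rewrite e_sym; have [ij1 | ne] := eqVneq i j.+1; first by subst i; rewrite step ?eqxx ?orbT.
  have -> : (j == i.+1) = false by lia.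
  by apply/negbTE/negP => /(shortest_path_chordless ji ip) ij1; rewrite ij1 eqxx in ne.
Qed.

End ShortestPath.

Lemma induced_path_of_far (T : finType) (e : rel T) L x y : simple_graph e ->
  connect e x y -> y \notin ball e x L ->
  iso_induced (fun i j : 'I_L.+1 => path_rel i j) e.
Proof.
move=> [e_sym e_irr] /shortest_path_exists[p [p_path p_last p_min]] y_far.
rewrite -{}p_last in p_min y_far.
have Lp : L < size p.
  rewrite ltnNge; apply: contra y_far => pL.
  exact: subsetP (ball_monotone e x pL) _ (path_last_in_ball p_path).
exists (fun i : 'I_L.+1 => nth x (x :: p) i); split=> [i j /eqP | i j].
  have := ltn_ord i; have := ltn_ord j.
  case: (ltngtP i j) => [ij | ji | /val_inj //] jL iL.
  - by rewrite (negbTE (shortest_path_uniq p_path p_min ij _)) //; lia.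
  - by rewrite eq_sym (negbTE (shortest_path_uniq p_path p_min ji _)) //; lia.
have := ltn_ord i; have := ltn_ord j => jL iL.
by rewrite shortest_path_induced //; lia.
Qed.

Lemma connected_complete_minor n (T : finType) (e : rel T) :
  simple_graph e -> connected_graph e -> ((2 ^ (n + n)).+1 ^ (2 * n)).+1 <= #|T| ->
  has_vertex_minor e (@complete_rel n).
Proof.
move=> se e_conn HT; have [//|deg] := complete_minor_or_degree_le n se.
have /card_gt0P[x _] : 0 < #|T| by apply: leq_trans HT.
have /subsetPn[y _ y_far] : ~~ ([set: T] \subset ball e x (2 * n)).
  apply: contraTN HT => /subset_leq_card; rewrite cardsT -ltnNge ltnS => T_small.
  exact: leq_trans T_small (card_ball deg _ _).
apply: has_vertex_minor_induced (induced_path_of_far se (e_conn x y) y_far) _.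
exact: path_complete_minor.
Qed.

Definition far_edges (T : finType) (e : rel T) (a b a' b' : T) :=
  [&& far e a a', far e a b', far e b a' & far e b b'].

Section GreedyMatching.
Variables (T : finType) (e : rel T) (D : nat).
Hypotheses (e_sym : symmetric e) (degree_le : forall x, #|nbhd e x| <= D).

Lemma far_sym u w : far e u w = far e w u.
Proof. by rewrite /far eq_sym e_sym. Qed.

Lemma far_edges_sym a b a' b' : far_edges e a b a' b' = far_edges e a' b' a b.
Proof.
rewrite /far_edges (far_sym a a') (far_sym a b') (far_sym b a') (far_sym b b').
by congr (_ && _); rewrite andbCA.
Qed.

Lemma far_edges_outside u z w w' :
  w \notin closed_nbhd e (closed_nbhd e [set u; z]) -> e w w' -> far_edges e u z w w'.
Proof.
move=> w_out ww'; set X := [set u; z].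
have w_far : w \notin closed_nbhd e X.
  by apply: contra w_out; apply/subsetP/subset_closed_nbhd.
have w'_far : w' \notin closed_nbhd e X.
  by apply: contra w_out => w'X; rewrite (mem_closed_nbhd w'X) // e_sym ww' orbT.
have uX : u \in X by rewrite !inE eqxx.
have zX : z \in X by rewrite !inE eqxx orbT.
by rewrite /far_edges !(far_notin_closed_nbhd uX, far_notin_closed_nbhd zX).
Qed.

Lemma card_closed_nbhd2_pair u z :
  #|closed_nbhd e (closed_nbhd e [set u; z])| <= 2 * D.+1 * D.+1.
Proof.
rewrite (leq_trans (card_closed_nbhd degree_le _)) // leq_mul2r.
rewrite (leq_trans (card_closed_nbhd degree_le _)) // leq_mul2r.
by rewrite cards2; case: (u != z); rewrite orbT.
Qed.

Variable x0 : T.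

Lemma greedy_induced_matching k (U : {set T}) :
  {in U, forall u, exists z, e u z} -> k * (2 * D.+1 * D.+1) <= #|U| ->
  exists a b : nat -> T, (forall i, i < k -> e (a i) (b i) /\ a i \in U) /\
    forall i j, i < k -> j < k -> i != j -> far_edges e (a i) (b i) (a j) (b j).
Proof.
elim: k U => [|k IHk] U U_edge HU; first by exists (fun=> x0), (fun=> x0).
have /card_gt0P[u uU] : 0 < #|U| by apply: leq_trans HU; rewrite mulSn; lia.
have [z uz] := U_edge u uU.
have W_small := card_closed_nbhd2_pair u z.
set W := closed_nbhd e _ in W_small; pose U' := U :\: W.
have U'U : U' \subset U by apply: subsetDl.
have HU' : k * (2 * D.+1 * D.+1) <= #|U'|.
  have := cardsID W U; have := subset_leq_card (subsetIr U W).
  by move: HU; rewrite /U' mulSn; lia.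
have [a [b [ab_edge ab_far]]] := IHk U' (sub_in1 (subsetP U'U) U_edge) HU'.
have new_far j : j < k -> far_edges e u z (a j) (b j).
  move=> jk; have [abj /setDP[_ aj_out]] := ab_edge j jk.
  exact: far_edges_outside aj_out abj.
exists (fun i => if i is i'.+1 then a i' else u).
exists (fun i => if i is i'.+1 then b i' else z).
split=> [[|i] /= ik | [|i] [|j] //= ik jk ij]; first by [].
- by have [abi /(subsetP U'U)] := ab_edge i ik.
- exact: new_far.
- by rewrite far_edges_sym new_far.
- exact: ab_far.
Qed.

End GreedyMatching.

Lemma matching_iso_induced n (T : finType) (e : rel T) (a b : nat -> T) :
  simple_graph e -> (forall i, i < n -> e (a i) (b i)) ->
  (forall i j, i < n -> j < n -> i != j -> far_edges e (a i) (b i) (a j) (b j)) ->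
  iso_induced (@matching_rel n) e.
Proof.
move=> [e_sym e_irr] ab_edge ab_far.
pose idx (x : 'I_n + 'I_n) := match x with inl i | inr i => i end.
pose g (x : 'I_n + 'I_n) := match x with inl i => a i | inr i => b i end.
have g_far x y : idx x != idx y -> far e (g x) (g y).
  case: x y => i [] j /= ij; have := ab_far i j (ltn_ord i) (ltn_ord j) ij; by case/and4P.
have g_edge (i : 'I_n) : e (a i) (b i) by apply: ab_edge.
exists g; split=> [x y gxy | x y].
  have [|/g_far] := eqVneq (idx x) (idx y); last by rewrite gxy /far eqxx.
  case: x y gxy => i [] j /= gij ij; subst j => //;
    by have := g_edge i; rewrite gij e_irr.
have [ij | ij] := eqVneq (idx x) (idx y).
  by case: x y ij => i [] j /= ij; subst j; rewrite ?eqxx ?e_irr ?g_edge // e_sym g_edge.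
have /andP[_ /negbTE ->] := g_far x y ij.
by case: x y ij => i [] j //= /negbTE ->.
Qed.

Lemma num_edges_le (T : finType) (e : rel T) D : (forall x, #|nbhd e x| <= D) ->
  num_edges e <= #|[set u | [exists z, e u z]]| * D.
Proof.
move=> degree_le; rewrite /num_edges.
pose F u := [set [set u; v] | v in nbhd e u].
apply: leq_trans (card_bigcup_le (F := F) _) => [|u _]; last first.
  exact: leq_trans (leq_imset_card _ _) (degree_le u).
apply/subset_leq_card/subsetP => E.
rewrite inE => /existsP[u /existsP[v /andP[/eqP -> uv]]].
apply/bigcupP; exists u; first by rewrite inE; apply/existsP; exists v.
by apply/imsetP; exists v; rewrite // inE.
Qed.

Lemma edges_complete_or_matching_minor n (T : finType) (e : rel T) :
  simple_graph e ->
  (n * (2 * (2 ^ (n + n)).+1 * (2 ^ (n + n)).+1) * 2 ^ (n + n)).+1 <= num_edges e ->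
  has_vertex_minor e (@complete_rel n) \/ has_vertex_minor e (@matching_rel n).
Proof.
move=> se HE; have [|deg] := complete_minor_or_degree_le n se; [by left | right].
set D := 2 ^ (n + n) in deg HE; set M := 2 * D.+1 * D.+1 in HE.
set U := [set u | [exists z, e u z]].
have HU : n * M < #|U|.
  have D_gt0 : 0 < D by rewrite expn_gt0.
  by rewrite -(ltn_pmul2r D_gt0) (leq_trans HE) ?num_edges_le.
have /card_gt0P[x0 _] : 0 < #|U| by apply: leq_trans HU.
have U_edge : {in U, forall u, exists z, e u z} by move=> u; rewrite inE => /existsP.
have [a [b [ab_edge ab_far]]] := greedy_induced_matching se.1 deg x0 U_edge (ltnW HU).
exists [::]; apply: matching_iso_induced se _ ab_far.
by move=> i /ab_edge[].
Qed.

Theorem theorem3p1 :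
  (forall n : nat, exists N : nat,
     forall (T : finType) (e : rel T), simple_graph e -> N <= #|T| ->
       has_vertex_minor e (@edgeless_rel n))
  /\
  (forall n : nat, exists N : nat,
     forall (T : finType) (e : rel T), simple_graph e -> connected_graph e ->
       N <= #|T| -> has_vertex_minor e (@complete_rel n))
  /\
  (forall n : nat, exists N : nat,
     forall (T : finType) (e : rel T), simple_graph e -> N <= num_edges e ->
       has_vertex_minor e (@complete_rel n) \/
       has_vertex_minor e (@matching_rel n)).
Proof.
split; [|split] => n; eexists.
- exact: edgeless_vertex_minor.
- exact: connected_complete_minor.
- exact: edges_complete_or_matching_minor.
Qed.
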